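(* Let $\mathcal P_1$ be a shortest path and $\mathcal P_2$ another path, both between nodes $u_0$ and $u_1$, and write $\delta=\delta_{\mathrm{worst}}(G)$. Define $$\eta_{\mathcal P_1,\mathcal P_2}=(6\delta+2)\log_2\Big((6\mu+2)(6\delta+2)\log_2\big[(6\delta+2)(3\mu+1)\mu\big]+\mu\Big)$$ if $\mathcal P_2$ is $\mu$-approximate short, and $$\eta_{\mathcal P_1,\mathcal P_2}=(6\delta+2)\log_2\Big(8(6\delta+2)\log_2\big[(6\delta+2)(4+2\varepsilon)\big]+1+\tfrac{\varepsilon}{2}\Big)$$ if $\mathcal P_2$ is $\varepsilon$-additive-approximate short. Then: (a) for every node $v$ on $\mathcal P_1$ there is a node $v'$ on $\mathcal P_2$ with $d_{v,v'}\le\lfloor\eta_{\mathcal P_1,\mathcal P_2}\rfloor$; (b) for every node $v'$ on $\mathcal P_2$ there is a node $v$ on $\mathcal P_1$ with $d_{v,v'}\le\zeta_{\mathcal P_1,\mathcal P_2}$, where $\zeta_{\mathcal P_1,\mathcal P_2}=\min\{\lfloor(\mu+1)\eta_{\mathcal P_1,\mathcal P_2}+\mu/2\rfloor,\ \lfloor \mu\, d_{u_0,u_1}/2\rfloor\}$ if $\mathcal P_2$ is $\mu$-approximate short, and $\zeta_{\mathcal P_1,\mathcal P_2}=\min\{\lfloor 2\eta_{\mathcal P_1,\mathcal P_2}+(1+\varepsilon)/2\rfloor,\ \lfloor (d_{u_0,u_1}+\varepsilon)/2\rfloor\}$ if $\mathcal P_2$ is $\varepsilon$-additive-approximate short.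
   Context: $G=(V,E)$ is a finite connected undirected graph with $n\ge 4$ nodes and $d_{u,v}$ denotes the shortest-path distance (number of edges); $\ell(\mathcal P)$ denotes the number of edges of a path $\mathcal P$. For any four nodes $w_1,w_2,w_3,w_4$, form the three sums $d_{w_1,w_2}+d_{w_3,w_4}$, $d_{w_1,w_3}+d_{w_2,w_4}$, $d_{w_1,w_4}+d_{w_2,w_3}$, order them as $S\le M\le L$, and set $\delta_{w_1,w_2,w_3,w_4}=(L-M)/2$; $\delta_{\mathrm{worst}}(G)=\max_{w_1,w_2,w_3,w_4\in V}\delta_{w_1,w_2,w_3,w_4}$. A path $(w_0,w_1,\dots,w_k)$ is $\mu$-approximate short (with $\mu\ge1$) if for all $0\le i<j\le k$ the length of its subpath from $w_i$ to $w_j$ is at most $\mu\, d_{w_i,w_j}$. It is $\varepsilon$-additive-approximate short (with $\varepsilon\ge0$) if its length is at most $d_{w_0,w_k}+\varepsilon$. *)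

From Stdlib Require Import Reals ZArith.
From mathcomp Require Import all_boot.
Open Scope R_scope.

Set Implicit Arguments.
Unset Strict Implicit.
Unset Printing Implicit Defensive.

Section Graph.
Variables (T : finType) (e : rel T).

Definition walkb (u v : T) (k : nat) : bool :=
  [exists p : k.-tuple T, path e u p && (last u p == v)].

(* shortest-path distance d_{u,v}: least k < |V| with a k-edge walk from u to v
   (for a connected graph such a k always exists) *)
Definition gdist (u v : T) : nat := find (walkb u v) (iota 0 #|T|).

(* A path  (w_0, ..., w_k) is represented as  w_0 :: p  with  path e w_0 p,
   it has  l = size p  edges; it is a path between u0 and u1 if w_0 = u0 and
   last u0 p = u1; paths have no repeated nodes. *)
Definition is_path (u0 u1 : T) (p : seq T) : Prop :=
  path e u0 p /\ last u0 p = u1 /\ uniq (u0 :: p).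

Definition is_shortest_path (u0 u1 : T) (p : seq T) : Prop :=
  is_path u0 u1 p /\ size p = gdist u0 u1.

(* twice the four-point quantity: L - M for the three pair-sums *)
Definition two_delta4 (w1 w2 w3 w4 : T) : nat :=
  let s1 := (gdist w1 w2 + gdist w3 w4)%N in
  let s2 := (gdist w1 w3 + gdist w2 w4)%N in
  let s3 := (gdist w1 w4 + gdist w2 w3)%N in
  let L := maxn s1 (maxn s2 s3) in
  let S := minn s1 (minn s2 s3) in
  let M := (s1 + s2 + s3 - L - S)%N in
  (L - M)%N.

Definition two_delta_worst : nat :=
  \max_(w : T * T * T * T) two_delta4 w.1.1.1 w.1.1.2 w.1.2 w.2.

Definition delta_worst : R := (INR two_delta_worst / 2).

Definition mu_approx_short (mu : R) (u0 : T) (p : seq T) : Prop :=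
  forall i j : nat, (i < j)%N -> (j <= size p)%N ->
    (INR (j - i)%N <= mu * INR (gdist (nth u0 (u0 :: p) i) (nth u0 (u0 :: p) j))).

Definition eps_additive_short (eps : R) (u0 : T) (p : seq T) : Prop :=
  (INR (size p) <= INR (gdist u0 (last u0 p)) + eps).

End Graph.

Definition log2 (x : R) : R := (ln x / ln 2).

Definition floorR (x : R) : Z := Int_part x.

Definition eta_mu (delta mu : R) : R :=
  ((6 * delta + 2) *
   log2 ((6 * mu + 2) * (6 * delta + 2) *
           log2 ((6 * delta + 2) * (3 * mu + 1) * mu) + mu)).

Definition eta_eps (delta eps : R) : R :=
  ((6 * delta + 2) *
   log2 (8 * (6 * delta + 2) * log2 ((6 * delta + 2) * (4 + 2 * eps))
         + 1 + eps / 2)).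

Definition zeta_mu (eta mu : R) (d : nat) : Z :=
  Z.min (floorR ((mu + 1) * eta + mu / 2)) (floorR (mu * INR d / 2)).

Definition zeta_eps (eta eps : R) (d : nat) : Z :=
  Z.min (floorR (2 * eta + (1 + eps) / 2)) (floorR ((INR d + eps) / 2)).

From Stdlib Require Import Reals ZArith Lra Lia Psatz.
From mathcomp Require Import all_boot zify.
Open Scope R_scope.

(* Both kinds of approximately short paths are (a, c)-quasi-geodesics: [t - s <= a d + c]
   between their s-th and t-th nodes.  Let D be the least radius such that every node of
   the shortest path P1 lies within D of P2, and let x be a node of P1 at distance at
   least D from all of P2.  Leaving P1 at distance 2D before and after x, jumping to P2
   and following it gives a walk of length at most (6a + 2) D + c whose nodes all stay at
   distance at least D from x, while x lies on a geodesic between its endpoints.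
   Bisecting the walk k times, where its length is at most 2^k, and applying the
   four-point condition to Gromov products at x yields a node of the walk within
   k delta + 1 of x; hence D <= k delta + 1 with k about log2 ((6a + 2) D + c), which
   bounds D by eta.  Conversely, a node of P2 lies between the projections of two
   consecutive nodes of P1, which are at most 2D + 1 apart, and its distance to one of
   them follows from the quasi-geodesic bound.  The other term of zeta holds because
   every node of P2 is within half its length of one of its endpoints. *)

Lemma leq_INR {m n : nat} : (m <= n)%N -> INR m <= INR n.
Proof. by move/leP; apply: le_INR. Qed.

Lemma ltn_INR {m n : nat} : (m < n)%N -> INR m < INR n.
Proof. by move/ltP; apply: lt_INR. Qed.

Lemma INR_addn m n : INR (m + n)%N = INR m + INR n.
Proof. exact: plus_INR. Qed.

Lemma INR_muln m n : INR (m * n)%N = INR m * INR n.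
Proof. exact: mult_INR. Qed.

Lemma INR_expn2 n : INR (2 ^ n)%N = 2 ^ n.
Proof. by elim: n => [|n IHn] //=; rewrite expnS INR_muln IHn. Qed.

Lemma Z_of_nat_le_floor n x : INR n <= x -> (Z.of_nat n <= floorR x)%Z.
Proof.
rewrite INR_IZR_INZ /floorR => le_nx.
have [_ floor_gt] := base_Int_part x.
suff : (Z.of_nat n - 1 < Int_part x)%Z by lia.
by apply: lt_IZR; rewrite minus_IZR; lra.
Qed.

Lemma ln_le {x y : R} : 0 < x -> x <= y -> ln x <= ln y.
Proof. by move=> x_gt0 [lt_xy | ->]; [left; apply: ln_increasing | right]. Qed.

Lemma ln_le_subr1 x : 0 < x -> ln x <= x - 1.
Proof. by move=> x_gt0; have := exp_ineq1_le (ln x); rewrite exp_ln //; lra. Qed.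

Lemma ln2_gt0 : 0 < ln 2.
Proof. by have := ln_lt_2; lra. Qed.

Lemma log2_ge_pow n b : 2 ^ n <= b -> INR n <= log2 b.
Proof.
move=> le_2n_b; have ln2_pos := ln2_gt0.
have := ln_le (pow_lt 2 n ltac:(lra)) le_2n_b; rewrite ln_pow; last lra.
by move=> ?; rewrite /log2; apply: (Rmult_le_reg_r (ln 2)) => //; field_simplify; lra.
Qed.

Lemma log2_ge1 b : 2 <= b -> 1 <= log2 b.
Proof. by move=> le_2b; apply: (log2_ge_pow 1); lra. Qed.

Lemma log2_le_sqr b : 2 <= b -> log2 b <= b ^ 2.
Proof.
move=> le_2b; have := ln_lt_2; have := ln_le_subr1 b ltac:(lra) => ln_b ln2_gt.
by rewrite /log2; apply: (Rmult_le_reg_r (ln 2)); [lra | field_simplify; nra].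
Qed.

(* Let [y := (6 delta + 2) log2 b].  Were [y < D], then [2 ^ (k - 1) < a D + c] would give
   [D <= k delta + 1 <= delta log2 (2 (a D + c)) + 1]; the tangent bound
   [ln u <= ln w + u / w - 1] at [w = a y + c], together with [2 w <= b ^ 6], makes this
   smaller than [D]. *)
Lemma log_radius_bound (delta a c b D : R) (k : nat) :
  0 <= delta -> 0 < a -> 0 <= c -> 2 <= b ->
  2 * (a * ((6 * delta + 2) * log2 b) + c) <= b ^ 6 ->
  D <= INR k * delta + 1 -> ((0 < k)%N -> 2 ^ k.-1 < a * D + c) ->
  D <= (6 * delta + 2) * log2 b.
Proof.
move=> delta_ge0 a_gt0 c_ge0 le_2b budget D_le D_lt.
have ln2_pos := ln2_gt0; have ln2_gt := ln_lt_2; have log2b_ge1 := log2_ge1 b le_2b.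
set y := (6 * delta + 2) * log2 b in budget *.
have y_ge : 6 * delta + 2 <= y by rewrite /y; nra.
case: (posnP k) => [k0 | k_gt0]; first by rewrite k0 /= in D_le; lra.
apply: Rnot_lt_le => lt_yD.
set w := a * y + c in budget; set u := a * D + c in D_lt.
have w_gt0 : 0 < w by rewrite /w; nra.
have lt_wu : w < u by rewrite /w /u; nra.
have ln_u_gt : INR k.-1 * ln 2 < ln u.
  rewrite -ln_pow; last lra.
  by apply: ln_increasing; [apply: pow_lt; lra | apply: D_lt].
have ln_u_le : ln u <= ln w + a * (D - y) / w.
  have ratio : u / w - 1 = a * (D - y) / w by rewrite /u /w; field; nra.
  have := ln_le_subr1 (u / w) ltac:(apply: Rdiv_lt_0_compat; lra).
  have winv_gt0 : 0 < / w by apply: Rinv_0_lt_compat.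
  by rewrite ratio /Rdiv ln_mult ?ln_Rinv //; lra.
have ln_w_le : ln w + ln 2 <= 6 * ln b.
  have -> : 6 * ln b = ln (b ^ 6) by rewrite ln_pow /=; lra.
  rewrite -ln_mult; try lra.
  by apply: ln_le; nra.
have y_ln2 : y * ln 2 = (6 * delta + 2) * ln b by rewrite /y /log2; field; lra.
have ln_2b : ln 2 <= ln b by apply: ln_le; lra.
have slope : 2 * (delta * (a * (D - y) / w)) <= D - y.
  have le_w : 2 * delta * a <= w by rewrite /w; nra.
  rewrite /Rdiv; apply: (Rmult_le_reg_r w) => //.
  by rewrite !Rmult_assoc Rinv_l ?Rmult_1_r; nra.
have k_ln2 : INR k = INR k.-1 + 1 by rewrite -{1}(prednK k_gt0) S_INR.
have D_ln2 : D * ln 2 <= (INR k.-1 * ln 2) * delta + delta * ln 2 + ln 2.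
  by rewrite k_ln2 in D_le; nra.
have : (INR k.-1 * ln 2) * delta <= ln u * delta by nra.
have : (D - y) / 2 < (D - y) * ln 2 by nra.
nra.
Qed.

Lemma log2_budget {K c b : R} : 2 <= K -> 3 * K <= b -> 0 <= c <= 2 * b ->
  2 * (K * log2 b + c) <= b ^ 6.
Proof.
move=> K_ge2 le_3K_b [c_ge0 c_le].
have le_2b : 2 <= b by lra.
have log2b_le := log2_le_sqr b le_2b; have log2b_ge1 := log2_ge1 b le_2b.
have : 3 * (K * log2 b) <= b ^ 3 by rewrite /=; nra.
have : 4 * b <= b ^ 3 by rewrite /=; nra.
have : 2 * b ^ 3 <= b ^ 6.
  have b3_ge2 : 2 <= b ^ 3 by rewrite /=; nra.
  have -> : b ^ 6 = b ^ 3 * b ^ 3 by ring.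
  nra.
lra.
Qed.

Lemma eta_mu_log2 {delta mu : R} : 0 <= delta -> 1 <= mu -> exists b,
  [/\ eta_mu delta mu = (6 * delta + 2) * log2 b,
      3 * ((6 * mu + 2) * (6 * delta + 2)) <= b & 0 <= 2 * b].
Proof.
move=> delta_ge0 mu_ge1; set K := (6 * mu + 2) * (6 * delta + 2).
have K_ge : 16 <= K by rewrite /K; nra.
have : INR 3 <= log2 ((6 * delta + 2) * (3 * mu + 1) * mu).
  by apply: log2_ge_pow; rewrite /=; nra.
rewrite /= => L_ge3.
by exists (K * log2 ((6 * delta + 2) * (3 * mu + 1) * mu) + mu); split=> //; nra.
Qed.

Lemma eta_eps_log2 {delta eps : R} : 0 <= delta -> 0 <= eps -> exists b,
  [/\ eta_eps delta eps = (6 * delta + 2) * log2 b,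
      3 * ((6 * 1 + 2) * (6 * delta + 2)) <= b & eps <= 2 * b].
Proof.
move=> delta_ge0 eps_ge0.
have : INR 3 <= log2 ((6 * delta + 2) * (4 + 2 * eps)).
  by apply: log2_ge_pow; rewrite /=; nra.
rewrite /= => L_ge3.
exists (8 * (6 * delta + 2) * log2 ((6 * delta + 2) * (4 + 2 * eps)) + 1 + eps / 2).
by split=> //; nra.
Qed.

Set Implicit Arguments.
Unset Strict Implicit.

Section FunctionalWalks.
Variables (T : Type) (r : T -> T -> Prop).

Definition fwalk (f : nat -> T) (n : nat) : Prop :=
  forall i, (i < n)%N -> r (f i) (f i.+1).

Definition fcat (f g : nat -> T) (a i : nat) : T :=
  if (i <= a)%N then f i else g (i - a)%N.

Lemma fcat0 f g a : fcat f g a 0 = f 0%N.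
Proof. by rewrite /fcat leq0n. Qed.

Lemma fcat_end f g a b : f a = g 0%N -> fcat f g a (a + b) = g b.
Proof.
rewrite /fcat => fg; case: leqP => [le_ab_a | _]; last by rewrite addKn.
have -> : b = 0%N by lia.
by rewrite addn0.
Qed.

Lemma fwalk_cat f g a b : fwalk f a -> fwalk g b -> f a = g 0%N ->
  fwalk (fcat f g a) (a + b).
Proof.
move=> walk_f walk_g fg i lt_i_ab; rewrite /fcat.
case: (ltngtP i a) => [lt_ia | lt_ai | eq_ia]; first exact: walk_f.
  have -> : (i.+1 - a = (i - a).+1)%N by lia.
  by apply: walk_g; lia.
by rewrite eq_ia subSnn fg; apply: walk_g; lia.
Qed.

Lemma fcat_all (P : T -> Prop) f g a b :
  (forall j, (j <= a)%N -> P (f j)) -> (forall j, (j <= b)%N -> P (g j)) ->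
  forall j, (j <= a + b)%N -> P (fcat f g a j).
Proof.
by move=> Pf Pg j le_j_ab; rewrite /fcat; case: ifP => le_ja; [apply: Pf | apply: Pg; lia].
Qed.

Lemma fwalk_rev f n : (forall x y, r x y -> r y x) -> fwalk f n ->
  fwalk (fun i => f (n - i)%N) n.
Proof.
move=> r_sym walk_f i lt_in; apply: r_sym.
have -> : (n - i = (n - i.+1).+1)%N by lia.
by apply: walk_f; lia.
Qed.

Lemma fwalk_shift f n s t : (s <= t)%N -> (t <= n)%N -> fwalk f n ->
  fwalk (fun j => f (s + j)%N) (t - s).
Proof. by move=> le_st le_tn walk_f j lt_j; rewrite addnS; apply: walk_f; lia. Qed.

End FunctionalWalks.

Section Distance.
Variables (T : finType) (e : rel T).
Hypothesis e_sym : symmetric e.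
Hypothesis e_conn : forall u v : T, connect e u v.

Local Notation d := (gdist e).

Lemma walkb_fwalk u v k : walkb e u v k <->
  exists f, [/\ f 0%N = u, f k = v & fwalk e f k].
Proof.
split=> [/existsP [p /andP [walk_p /eqP last_p]] | [f [f0 fk walk_f]]].
  exists (fun i => nth u (u :: p) i); split=> //.
    by rewrite -last_p -[last u p]/(last u (u :: p)) -nth_last /= size_tuple.
  by move=> i lt_ik; move/(pathP u): walk_p; apply; rewrite size_tuple.
apply/existsP; have size_p : size (map f (iota 1 k)) == k by rewrite size_map size_iota.
have nth_p i : (i <= k)%N -> nth u (u :: map f (iota 1 k)) i = f i.
  case: i => [|i] le_ik //=; by rewrite (nth_map 0%N) ?size_iota ?nth_iota ?add1n.
exists (Tuple size_p); apply/andP; split => /=.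
  apply/(pathP u) => i; rewrite size_map size_iota => lt_ik.
  by move: (walk_f i lt_ik); rewrite -(nth_p i) 1?ltnW // -(nth_p i.+1).
rewrite -[last _ _]/(last u (u :: map f (iota 1 k))) -nth_last /=.
by rewrite size_map size_iota nth_p ?fk.
Qed.

Lemma has_walkb u v : has (walkb e u v) (iota 0 #|T|).
Proof.
have /connectP [p walk_p ->] := e_conn u v.
have [q walk_q uniq_q _] := shortenP walk_p.
apply/hasP; exists (size q).
  rewrite mem_iota add0n /= -ltnS -[(size q).+1]/(size (u :: q)).
  by rewrite -(card_uniqP uniq_q) ltnS max_card.
by apply/existsP; exists (in_tuple q); rewrite /= walk_q eqxx.
Qed.

Lemma gdist_le_card u v : (d u v <= #|T|)%N.
Proof. by have := find_size (walkb e u v) (iota 0 #|T|); rewrite size_iota. Qed.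

Lemma gdist_walkb u v : walkb e u v (d u v).
Proof.
have := nth_find 0%N (has_walkb u v); rewrite nth_iota ?add0n //.
by have := has_walkb u v; rewrite has_find size_iota.
Qed.

Lemma gdist_min u v k : walkb e u v k -> (d u v <= k)%N.
Proof.
move=> walk_k; rewrite leqNgt; apply/negP => lt_k.
have := before_find 0%N lt_k; rewrite nth_iota ?add0n ?walk_k //.
by have := gdist_le_card u v; rewrite /gdist in lt_k *; lia.
Qed.

Lemma gdist_fwalk u v : exists f, [/\ f 0%N = u, f (d u v) = v & fwalk e f (d u v)].
Proof. exact/walkb_fwalk/gdist_walkb. Qed.

Lemma fwalk_gdist f k : fwalk e f k -> (d (f 0%N) (f k) <= k)%N.
Proof. by move=> walk_f; apply/gdist_min/walkb_fwalk; exists f. Qed.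

Lemma gdist_triangle u v w : (d u w <= d u v + d v w)%N.
Proof.
have [f [f0 fv walk_f]] := gdist_fwalk u v.
have [g [g0 gw walk_g]] := gdist_fwalk v w.
have fg : f (d u v) = g 0%N by rewrite fv g0.
have := fwalk_gdist (fwalk_cat walk_f walk_g fg).
by rewrite fcat0 fcat_end // f0 gw.
Qed.

Lemma gdist_sym u v : d u v = d v u.
Proof.
suff le_d x y : (d x y <= d y x)%N by apply/eqP; rewrite eqn_leq !le_d.
have [f [f0 fx walk_f]] := gdist_fwalk y x.
have e_symP a b : e a b -> e b a by rewrite e_sym.
have := fwalk_gdist (fwalk_rev e_symP walk_f).
by rewrite subn0 subnn f0 fx.
Qed.

Lemma gdistxx u : d u u = 0%N.
Proof. by apply/eqP; rewrite -leqn0 (@fwalk_gdist (fun=> u) 0). Qed.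

Lemma gdist_edge u v : e u v -> (d u v <= 1)%N.
Proof. by move=> uv; apply: (@fwalk_gdist (fun i => if i is 0 then u else v)) => -[]. Qed.

Definition near1 (x y : T) : Prop := (d x y <= 1)%N.

Lemma near1_sym x y : near1 x y -> near1 y x.
Proof. by rewrite /near1 gdist_sym. Qed.

Lemma fwalk_near1 f n : fwalk e f n -> fwalk near1 f n.
Proof. by move=> walk_f i lt_in; apply/gdist_edge/walk_f. Qed.

Lemma fwalk_near1_gdist f n i j : fwalk near1 f n -> (i <= j <= n)%N ->
  (d (f i) (f j) <= j - i)%N.
Proof.
move=> walk_f /andP [le_ij le_jn]; elim: j le_ij le_jn => [|j IHj] le_ij le_jn.
  have -> : i = 0%N by lia.
  by rewrite gdistxx.
case: (ltngtP i j.+1) => [lt_ij | lt_ji | ->]; [|lia|by rewrite gdistxx].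
have := IHj lt_ij (ltnW le_jn); have := walk_f j le_jn.
by have := gdist_triangle (f i) (f j) (f j.+1); rewrite /near1; lia.
Qed.

Lemma geodesic_fwalk x y : exists f, [/\ f 0%N = x, f (d x y) = y, fwalk near1 f (d x y) &
  forall j, (j <= d x y)%N -> d x (f j) = j /\ d (f j) y = (d x y - j)%N].
Proof.
have [f [f0 fy /fwalk_near1 walk_f]] := gdist_fwalk x y.
exists f; split=> // j le_j.
have := fwalk_near1_gdist (i := 0) (j := j) walk_f ltac:(lia).
have := fwalk_near1_gdist (i := j) (j := d x y) walk_f ltac:(lia).
by have := gdist_triangle x (f j) y; rewrite f0 fy; lia.
Qed.

End Distance.

Section FourPoint.
Variables (T : finType) (e : rel T).
Hypothesis e_sym : symmetric e.
Hypothesis e_conn : forall u v : T, connect e u v.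

Local Notation d := (gdist e).
Local Notation tw := (two_delta_worst e).

Lemma four_point x y z w :
  (d x z + d y w <= maxn (d x y + d z w) (d x w + d y z) + tw)%N.
Proof.
have : (two_delta4 e x y z w <= tw)%N.
  exact: (@leq_bigmax _ (fun q : T * T * T * T => two_delta4 e q.1.1.1 q.1.1.2 q.1.2 q.2)
                       (x, y, z, w)).
by rewrite /two_delta4 /=; lia.
Qed.

Lemma delta_worst_ge0 : 0 <= delta_worst e.
Proof. by rewrite /delta_worst; have := pos_INR tw; lra. Qed.

(* Twice the Gromov product [(a|b)_w]. *)
Definition gromov2 (w a b : T) : nat := (d a w + d b w - d a b)%N.

Lemma gromov2_min_le x y z w :
  (minn (gromov2 w x y) (gromov2 w y z) <= gromov2 w x z + tw)%N.
Proof.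
have := four_point x y z w; have := gdist_triangle e_conn x w y.
have := gdist_triangle e_conn y w z; have := gdist_triangle e_conn x w z.
by rewrite /gromov2 (gdist_sym e_sym e_conn w y) (gdist_sym e_sym e_conn w z); lia.
Qed.

Lemma gromov2_bisect w k (f : nat -> T) n : (0 < n)%N -> (n <= 2 ^ k)%N ->
  exists2 i, (i < n)%N & (gromov2 w (f i) (f i.+1) <= gromov2 w (f 0%N) (f n) + k * tw)%N.
Proof.
elim: k f n => [|k IHk] f n n_gt0 le_n_2k.
  have -> : n = 1%N by rewrite expn0 in le_n_2k; lia.
  by exists 0%N; rewrite ?mul0n ?addn0.
have [le_n_half | lt_half_n] := leqP n (2 ^ k).
  by have [i lt_in le_i] := IHk f n n_gt0 le_n_half; exists i; lia.
set m := (2 ^ k)%N in lt_half_n.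
have m_gt0 : (0 < m)%N by rewrite expn_gt0.
have [i1 lt_i1 le_i1] := IHk f m m_gt0 (leqnn _).
have le_rest : (n - m <= 2 ^ k)%N by rewrite expnS in le_n_2k; lia.
have [i2 lt_i2 le_i2] := IHk (fun j => f (m + j)%N) (n - m)%N ltac:(lia) le_rest.
rewrite addn0 subnKC in le_i2; last lia.
have := gromov2_min_le (f 0%N) (f m) (f n) w.
have [le_left | lt_right] := leqP (gromov2 w (f 0%N) (f m)) (gromov2 w (f m) (f n)).
  by exists i1; rewrite ?mulSn; lia.
by exists (m + i2)%N; rewrite -?addnS ?mulSn; lia.
Qed.

(* If [v] lies on a geodesic between the endpoints, the Gromov product of [f 0] and
   [f n] at [v] vanishes, while that of two neighbours bounds [2 d(f i, v) - 2]. *)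
Lemma fwalk_near_geodesic_point f n k v : fwalk (near1 e) f n ->
  (d (f 0%N) v + d v (f n) = d (f 0%N) (f n))%N -> (n <= 2 ^ k)%N ->
  exists2 i, (i <= n)%N & (2 * d (f i) v <= k * tw + 2)%N.
Proof.
move=> walk_f on_geo le_n_2k.
have [n0 | n_gt0] := posnP n.
  by exists 0%N => //; move: on_geo; rewrite n0 gdistxx (gdist_sym e_sym e_conn v); lia.
have [i lt_in le_i] := @gromov2_bisect v k f n n_gt0 le_n_2k.
exists i; first lia.
move: on_geo le_i; rewrite /gromov2 (gdist_sym e_sym e_conn v (f n)).
by have := walk_f i lt_in; have := gdist_triangle e_conn (f i) (f i.+1) v; rewrite /near1; lia.
Qed.

End FourPoint.

Section QuasiGeodesics.
Variables (T : finType) (e : rel T).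
Hypothesis e_sym : symmetric e.
Hypothesis e_conn : forall u v : T, connect e u v.

Local Notation d := (gdist e).
Local Notation tw := (two_delta_worst e).
Let dC := gdist_sym e_sym e_conn.
Let dT := gdist_triangle e_conn.

Lemma far_geodesic x y z D : (d x y <= D)%N -> (D <= d y z)%N ->
  d x y = 0%N \/ (2 * D <= d x z)%N ->
  exists f, [/\ f 0%N = x, f (d x y) = y, fwalk (near1 e) f (d x y) &
    forall j, (j <= d x y)%N -> (D <= d (f j) z)%N].
Proof.
move=> le_xy_D le_D_yz far_x.
have [f [f0 fy walk_f on_f]] := geodesic_fwalk e_conn x y.
exists f; split=> // j le_j; have [dxf dfy] := on_f j le_j.
have := dT y (f j) z; have := dT x (f j) z.
by rewrite (dC y (f j)) dfy dxf; lia.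
Qed.

Variables (u0 u1 : T) (p1 p2 : seq T).
Hypothesis p1_shortest : is_shortest_path e u0 u1 p1.
Hypothesis p2_path : is_path e u0 u1 p2.

Definition node (p : seq T) (i : nat) : T := nth u0 (u0 :: p) i.

Local Notation x1 := (node p1).
Local Notation x2 := (node p2).
Local Notation n1 := (size p1).
Local Notation n2 := (size p2).

Lemma path_fwalk p : is_path e u0 u1 p -> fwalk (near1 e) (node p) (size p).
Proof. by move=> [walk_p _] i lt_i; apply: gdist_edge; move/(pathP u0): walk_p; apply. Qed.

Lemma node_last p : is_path e u0 u1 p -> node p (size p) = u1.
Proof. by move=> [_ [<- _]]; rewrite /node -[last u0 p]/(last u0 (u0 :: p)) -nth_last. Qed.

Lemma node_mem p i : (i <= size p)%N -> node p i \in u0 :: p.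
Proof. by move=> le_i; apply: mem_nth. Qed.

Lemma mem_node p v : v \in u0 :: p -> exists2 i, (i <= size p)%N & node p i = v.
Proof. by move/(nthP u0) => [i lt_i <-]; exists i. Qed.

Lemma shortest_node_gdist i j : (i <= j <= n1)%N -> d (x1 i) (x1 j) = (j - i)%N.
Proof.
move=> le_ijn; have walk1 := path_fwalk p1_shortest.1.
have le_0i : (0 <= i <= n1)%N by lia.
have le_jn : (j <= n1 <= n1)%N by lia.
have := fwalk_near1_gdist e_conn walk1 le_ijn; have := fwalk_near1_gdist e_conn walk1 le_0i.
have := fwalk_near1_gdist e_conn walk1 le_jn; have := dT (x1 0%N) (x1 i) (x1 j).
have := dT (x1 0%N) (x1 j) (x1 n1).
have : d (x1 0%N) (x1 n1) = n1 by rewrite node_last ?p1_shortest.2 //; exact: p1_shortest.1.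
lia.
Qed.

Lemma path_node_gdist i j : (i <= j <= n2)%N -> (d (x2 i) (x2 j) <= j - i)%N.
Proof. exact/fwalk_near1_gdist/path_fwalk. Qed.

Definition quasi_geodesic (a c : R) (p : seq T) : Prop :=
  forall s t, (s <= t <= size p)%N -> INR (t - s) <= a * INR (d (node p s) (node p t)) + c.

Lemma approx_short_quasi_geodesic mu p : 0 <= mu ->
  mu_approx_short e mu u0 p -> quasi_geodesic mu 0 p.
Proof.
move=> mu_ge0 short s t /andP [le_st le_t]; rewrite Rplus_0_r.
have [lt_st | lt_ts | ->] := ltngtP s t; [exact: short | lia |].
by rewrite subnn; apply: Rmult_le_pos => //; apply: pos_INR.
Qed.

Lemma additive_short_quasi_geodesic eps :
  eps_additive_short e eps u0 p2 -> quasi_geodesic 1 eps p2.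
Proof.
rewrite /eps_additive_short p2_path.2.1 => short s t le_stn; rewrite Rmult_1_l.
have := path_node_gdist (i := 0%N) (j := s) ltac:(lia).
have := path_node_gdist (i := t) (j := n2) ltac:(lia).
have := dT (x2 0%N) (x2 s) (x2 n2); have := dT (x2 s) (x2 t) (x2 n2).
have : d (x2 0%N) (x2 n2) = d u0 u1 by rewrite node_last.
move=> ends tri1 tri2 le_tn le_s.
have := @leq_INR (t - s + d u0 u1) (n2 + d (x2 s) (x2 t)) ltac:(lia).
by rewrite !INR_addn; lra.
Qed.

Variables (a c : R).
Hypothesis a_ge0 : 0 <= a.
Hypothesis c_ge0 : 0 <= c.
Hypothesis p2_quasi : quasi_geodesic a c p2.

Lemma quasi_geodesic_segment s t : (s <= n2)%N -> (t <= n2)%N ->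
  exists L F, [/\ F 0%N = x2 s, F L = x2 t, fwalk (near1 e) F L,
    forall j, (j <= L)%N -> exists2 r, (r <= n2)%N & F j = x2 r &
    INR L <= a * INR (d (x2 s) (x2 t)) + c].
Proof.
move=> le_s le_t; have walk2 := path_fwalk p2_path.
have [le_st | lt_ts] := leqP s t.
  exists (t - s)%N, (fun j => x2 (s + j)%N); split=> /=.
  - by rewrite addn0.
  - by rewrite subnKC.
  - exact: fwalk_shift walk2.
  - by move=> j le_j; exists (s + j)%N => //; lia.
  - by apply: p2_quasi; lia.
exists (s - t)%N, (fun j => x2 (s - j)%N); split=> /=.
- by rewrite subn0.
- by rewrite subKn // ltnW.
- move=> j lt_j; apply: near1_sym e_sym e_conn _ _ _.
  have -> : (s - j = (s - j.+1).+1)%N by lia.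
  by apply: walk2; lia.
- by move=> j le_j; exists (s - j)%N => //; lia.
- by rewrite dC; apply: p2_quasi; lia.
Qed.

Definition covered_within (D : nat) : Prop :=
  forall i, (i <= n1)%N -> exists2 s, (s <= n2)%N & (d (x1 i) (x2 s) <= D)%N.

Lemma least_covering_radius : exists D, covered_within D /\
  (D = 0%N \/ exists2 i0, (i0 <= n1)%N & forall s, (s <= n2)%N -> (D <= d (x1 i0) (x2 s))%N).
Proof.
pose covb D := [forall i : 'I_n1.+1, [exists s : 'I_n2.+1, d (x1 i) (x2 s) <= D]]%N.
have covbP D : reflect (covered_within D) (covb D).
  apply: (iffP forallP) => [cov i le_i | cov i].
    have /existsP [s le_s] := cov (Ordinal (le_i : (i < n1.+1)%N)).
    by exists s => //; exact: (ltn_ord s).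
  have [s le_s le_d] := cov i (ltn_ord i).
  by apply/existsP; exists (Ordinal (le_s : (s < n2.+1)%N)).
have cov_card : covb #|T|.
  by apply/covbP => i _; exists 0%N => //; apply: gdist_le_card.
have [D /covbP cov_D min_D] := ex_minnP (ex_intro covb _ cov_card).
exists D; split=> //; case: (posnP D) => [-> | D_gt0]; [by left | right].
have /forallPn [[i0 lt_i0] /existsPn far] : ~~ covb D.-1.
  by apply/negP => /min_D; lia.
exists i0 => // s le_s.
by have := far (Ordinal (le_s : (s < n2.+1)%N)); rewrite /= -ltnNge; lia.
Qed.

Section FarPoint.
Variables (D i0 : nat).
Hypothesis cov_D : covered_within D.
Hypothesis le_i0 : (i0 <= n1)%N.
Hypothesis far_i0 : forall s, (s <= n2)%N -> (D <= d (x1 i0) (x2 s))%N.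

Lemma anchored_geodesic i : (i <= n1)%N ->
  i = 0%N \/ i = n1 \/ (2 * D <= d (x1 i) (x1 i0))%N ->
  exists s f, [/\ (s <= n2)%N, (d (x1 i) (x2 s) <= D)%N, f 0%N = x1 i,
    f (d (x1 i) (x2 s)) = x2 s &
    fwalk (near1 e) f (d (x1 i) (x2 s)) /\
    forall j, (j <= d (x1 i) (x2 s))%N -> (D <= d (f j) (x1 i0))%N].
Proof.
move=> le_i end_or_far.
have [s [le_s le_D far_s]] : exists s, [/\ (s <= n2)%N, (d (x1 i) (x2 s) <= D)%N &
    d (x1 i) (x2 s) = 0%N \/ (2 * D <= d (x1 i) (x1 i0))%N].
  case: end_or_far => [-> | [-> | far]].
  - by exists 0%N; rewrite gdistxx; split=> //; left.
  - by exists n2; rewrite !node_last ?gdistxx //; [split=> //; left | case: p1_shortest].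
  - by have [s le_s le_D] := cov_D le_i; exists s; split=> //; right.
have le_D_far : (D <= d (x2 s) (x1 i0))%N by rewrite dC; apply: far_i0.
have [f [f0 fs walk_f far_f]] := far_geodesic le_D le_D_far far_s.
by exists s, f.
Qed.

(* The detour runs from [x1 (i0 - 2D)] to [x2 s], along [p2] to [x2 t], and back to
   [x1 (i0 + 2D)]: every node of it is at distance at least [D] from [x1 i0]. *)
Lemma far_detour : exists f N, [/\ fwalk (near1 e) f N,
  (d (f 0%N) (x1 i0) + d (x1 i0) (f N) = d (f 0%N) (f N))%N,
  forall j, (j <= N)%N -> (D <= d (f j) (x1 i0))%N &
  INR N <= (6 * a + 2) * INR D + c].
Proof.
set lo := (i0 - 2 * D)%N; set hi := minn (i0 + 2 * D) n1.
have lo_i0 : d (x1 lo) (x1 i0) = (i0 - lo)%N by apply: shortest_node_gdist; lia.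
have i0_hi : d (x1 i0) (x1 hi) = (hi - i0)%N by apply: shortest_node_gdist; lia.
have lo_hi : d (x1 lo) (x1 hi) = (hi - lo)%N by apply: shortest_node_gdist; lia.
have [s [f1 [le_s le_D1 f10 f1s [walk_f1 far_f1]]]] :=
  anchored_geodesic (i := lo) ltac:(lia) ltac:(rewrite lo_i0; lia).
have [t [f2 [le_t le_D2 f20 f2t [walk_f2 far_f2]]]] :=
  anchored_geodesic (i := hi) ltac:(lia) ltac:(rewrite -dC i0_hi; lia).
set m1 := d (x1 lo) (x2 s) in le_D1 f1s walk_f1 far_f1.
set m2 := d (x1 hi) (x2 t) in le_D2 f2t walk_f2 far_f2.
have [L [F [F0 FL walk_F on_p2 le_L]]] := quasi_geodesic_segment le_s le_t.
pose g2 j := f2 (m2 - j)%N.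
have walk_g2 : fwalk (near1 e) g2 m2 by apply: fwalk_rev walk_f2; apply: near1_sym.
have g20 : g2 0%N = x2 t by rewrite /g2 subn0.
have g2m : g2 m2 = x1 hi by rewrite /g2 subnn.
have f1F : f1 m1 = F 0%N by rewrite f1s F0.
have Fg2 : F L = g2 0%N by rewrite FL g20.
exists (fcat f1 (fcat F g2 L) m1), (m1 + (L + m2))%N; split.
- by apply: fwalk_cat walk_f1 (fwalk_cat walk_F walk_g2 Fg2) _; rewrite fcat0.
- by rewrite fcat0 fcat_end ?fcat0 // fcat_end // f10 g2m lo_i0 i0_hi lo_hi; lia.
- pose far y := (D <= d y (x1 i0))%N.
  apply: (fcat_all (P := far)) => //; apply: (fcat_all (P := far)) => j le_j.
    by have [r le_r ->] := on_p2 j le_j; rewrite /far dC; apply: far_i0.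
  by apply: far_f2; lia.
- have st_le : (d (x2 s) (x2 t) <= 6 * D)%N.
    have := dT (x2 s) (x1 lo) (x2 t); have := dT (x1 lo) (x1 hi) (x2 t).
    by rewrite (dC (x2 s) (x1 lo)) -/m1 -/m2 lo_hi; lia.
  have := leq_INR st_le; rewrite INR_muln !INR_addn.
  have := leq_INR le_D1; have := leq_INR le_D2; rewrite /= in le_L *; nra.
Qed.

End FarPoint.

Lemma covering_radius_bound b : 2 <= b ->
  2 * ((6 * a + 2) * ((6 * delta_worst e + 2) * log2 b) + c) <= b ^ 6 ->
  exists D, covered_within D /\ INR D <= (6 * delta_worst e + 2) * log2 b.
Proof.
move=> le_2b budget; have delta_ge0 := delta_worst_ge0 e; have := log2_ge1 b le_2b.
have [D [cov_D [D0 | [i0 le_i0 far_i0]]]] := least_covering_radius.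
  by exists D; split=> //; rewrite D0 /=; nra.
exists D; split=> //.
have [f [N [walk_f on_geo far_f le_N]]] := far_detour cov_D le_i0 far_i0.
have N_le_2N : (N <= 2 ^ N)%N by apply/ltnW/ltn_expl.
have [k le_N_2k min_k] := ex_minnP (ex_intro (fun k => N <= 2 ^ k)%N N N_le_2N).
have [j le_j near_j] := fwalk_near_geodesic_point e_sym e_conn walk_f on_geo le_N_2k.
apply: (@log_radius_bound _ (6 * a + 2) c _ _ k) => //; first lra.
  have := far_f j le_j => far_j.
  have := @leq_INR (2 * D) (k * tw + 2) ltac:(lia).
  by rewrite /delta_worst !INR_addn !INR_muln /=; lra.
move=> k_gt0; apply: Rlt_le_trans le_N; rewrite -INR_expn2; apply: ltn_INR.
by rewrite ltnNge; apply/negP => /min_k; lia.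
Qed.

Lemma straddle_bound E i i' s s' j : (i <= n1)%N -> (i' <= n1)%N ->
  (s <= j <= s')%N -> (s' <= n2)%N ->
  (d (x1 i) (x2 s) <= E)%N -> (d (x1 i') (x2 s') <= E)%N ->
  (d (x2 s) (x2 s') <= 2 * E + 1)%N ->
  exists2 k, (k <= n1)%N & INR (d (x1 k) (x2 j)) <= (a + 1) * INR E + (a + c) / 2.
Proof.
move=> le_i le_i' /andP [le_sj le_js'] le_s' near_s near_s' ss'_le.
have span : INR (s' - s) <= a * (2 * INR E + 1) + c.
  have := p2_quasi (s := s) (t := s') ltac:(lia).
  have := leq_INR ss'_le; rewrite INR_addn INR_muln /=; nra.
have [first_half | second_half] := leqP (2 * (j - s)) (s' - s).
  exists i => //; have := path_node_gdist (i := s) (j := j) ltac:(lia).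
  have := dT (x1 i) (x2 s) (x2 j) => tri sj_le.
  have := @leq_INR (d (x1 i) (x2 j) + d (x1 i) (x2 j)) (E + E + (s' - s)) ltac:(lia).
  by rewrite !INR_addn; lra.
exists i' => //; have := path_node_gdist (i := j) (j := s') ltac:(lia).
have := dT (x1 i') (x2 s') (x2 j); rewrite (dC (x2 s')) => tri js'_le.
have := @leq_INR (d (x1 i') (x2 j) + d (x1 i') (x2 j)) (E + E + (s' - s)) ltac:(lia).
by rewrite !INR_addn; lra.
Qed.

(* Walking along [p1], the nodes of [p2] nearest to [x1 i] and [x1 i.+1] are at
   distance at most [2 E + 1]; some such consecutive pair straddles [x2 j]. *)
Lemma path_near_shortest E : covered_within E -> forall j, (j <= n2)%N ->
  exists2 i, (i <= n1)%N & INR (d (x1 i) (x2 j)) <= (a + 1) * INR E + (a + c) / 2.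
Proof.
move=> cov_E j le_j.
suff walk_p1 m i s : (i + m = n1)%N -> (s <= j)%N -> (d (x1 i) (x2 s) <= E)%N ->
    exists2 k, (k <= n1)%N & INR (d (x1 k) (x2 j)) <= (a + 1) * INR E + (a + c) / 2.
  by apply: (walk_p1 n1 0%N 0%N) => //; rewrite gdistxx.
elim: m i s => [|m IHm] i s i_m le_sj near_s.
  have end_n1 : x1 n1 = x2 n2 by rewrite !node_last //; case: p1_shortest.
  rewrite addn0 in i_m; subst i.
  apply: (@straddle_bound E n1 n1 s n2 j) => //; rewrite -?end_n1 ?gdistxx //.
    by apply/andP.
  by rewrite dC; lia.
have [s' le_s' near_s'] := cov_E i.+1 ltac:(lia).
have [le_s'j | lt_js'] := leqP s' j; first by apply: (IHm i.+1 s') => //; lia.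
apply: (@straddle_bound E i i.+1 s s' j) => //; try lia.
have := dT (x2 s) (x1 i) (x2 s'); have := dT (x1 i) (x1 i.+1) (x2 s').
by rewrite shortest_node_gdist ?(dC (x2 s)); lia.
Qed.

Lemma path_midpoint_near j : (j <= n2)%N ->
  exists2 i, (i <= n1)%N & (2 * d (x1 i) (x2 j) <= n2)%N.
Proof.
move=> le_j; have := path_node_gdist (i := 0) (j := j) ltac:(lia).
have := path_node_gdist (i := j) (j := n2) ltac:(lia).
have [first_half | second_half] := leqP (2 * j) n2.
  by exists 0%N => //; have -> : x1 0%N = x2 0%N by []; lia.
exists n1 => //; rewrite node_last; last by case: p1_shortest.
by rewrite -(node_last p2_path) dC; lia.
Qed.

Lemma quasi_geodesic_length : INR n2 <= a * INR (d u0 u1) + c.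
Proof.
have := p2_quasi (s := 0%N) (t := n2) ltac:(lia).
by rewrite subn0 (node_last p2_path).
Qed.

Theorem quasi_geodesic_fellow_travel b :
  3 * ((6 * a + 2) * (6 * delta_worst e + 2)) <= b -> c <= 2 * b ->
  (forall v, v \in u0 :: p1 -> exists2 v', v' \in u0 :: p2 &
     (Z.of_nat (d v v') <= floorR ((6 * delta_worst e + 2) * log2 b))%Z) /\
  (forall v', v' \in u0 :: p2 -> exists2 v, v \in u0 :: p1 &
     (Z.of_nat (d v v') <=
        Z.min (floorR ((a + 1) * ((6 * delta_worst e + 2) * log2 b) + (a + c) / 2))
              (floorR ((a * INR (d u0 u1) + c) / 2)))%Z).
Proof.
move=> le_3K_b c_le; have delta_ge0 := delta_worst_ge0 e.
have K_ge2 : 2 <= (6 * a + 2) * (6 * delta_worst e + 2) by nra.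
have budget := log2_budget K_ge2 le_3K_b (conj c_ge0 c_le).
rewrite Rmult_assoc in budget.
have [D [cov_D D_le]] := covering_radius_bound (b := b) ltac:(lra) budget.
split=> [v /mem_node [i le_i <-] | v' /mem_node [j le_j <-]].
  have [s le_s near_s] := cov_D i le_i.
  exists (x2 s); first exact: node_mem.
  by apply: Z_of_nat_le_floor; have := leq_INR near_s; lra.
have [i1 le_i1 near_i1] := path_near_shortest cov_D le_j.
have [i2 le_i2 near_i2] := path_midpoint_near le_j.
have {}near_i1 : INR (d (x1 i1) (x2 j)) <=
    (a + 1) * ((6 * delta_worst e + 2) * log2 b) + (a + c) / 2 by nra.
have {}near_i2 : INR (d (x1 i2) (x2 j)) <= (a * INR (d u0 u1) + c) / 2.
  by have := leq_INR near_i2; have := quasi_geodesic_length; rewrite INR_muln /=; lra.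
have [le12 | lt21] := leqP (d (x1 i1) (x2 j)) (d (x1 i2) (x2 j)).
  exists (x1 i1); first exact: node_mem.
  by apply: Z.min_glb; apply: Z_of_nat_le_floor; have := leq_INR le12; lra.
exists (x1 i2); first exact: node_mem.
by apply: Z.min_glb; apply: Z_of_nat_le_floor; have := leq_INR (ltnW lt21); lra.
Qed.

End QuasiGeodesics.

Theorem theorem6 (T : finType) (e : rel T)
    (e_sym : symmetric e) (e_irr : irreflexive e)
    (e_conn : forall u v : T, connect e u v)
    (n_ge4 : (4 <= #|T|)%N)
    (u0 u1 : T) (p1 p2 : seq T)
    (Hp1 : is_shortest_path e u0 u1 p1) (Hp2 : is_path e u0 u1 p2)
    (mu eps : R) (Hmu : (1 <= mu)) (Heps : (0 <= eps)) :
  (mu_approx_short e mu u0 p2 ->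
     (forall v, v \in u0 :: p1 -> exists2 v', v' \in u0 :: p2 &
        (Z.of_nat (gdist e v v') <= floorR (eta_mu (delta_worst e) mu))%Z) /\
     (forall v', v' \in u0 :: p2 -> exists2 v, v \in u0 :: p1 &
        (Z.of_nat (gdist e v v') <=
           zeta_mu (eta_mu (delta_worst e) mu) mu (gdist e u0 u1))%Z)) /\
  (eps_additive_short e eps u0 p2 ->
     (forall v, v \in u0 :: p1 -> exists2 v', v' \in u0 :: p2 &
        (Z.of_nat (gdist e v v') <= floorR (eta_eps (delta_worst e) eps))%Z) /\
     (forall v', v' \in u0 :: p2 -> exists2 v, v \in u0 :: p1 &
        (Z.of_nat (gdist e v v') <=
           zeta_eps (eta_eps (delta_worst e) eps) eps (gdist e u0 u1))%Z)).
Proof.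
have delta_ge0 := delta_worst_ge0 e.
have mu_ge0 : 0 <= mu by lra.
have fellow_travel := quasi_geodesic_fellow_travel e_sym e_conn Hp1 Hp2.
split=> [/(approx_short_quasi_geodesic mu_ge0) quasi
        | /(additive_short_quasi_geodesic e_conn Hp2) quasi].
  have [b [-> le_3K_b le_0_2b]] := eta_mu_log2 delta_ge0 Hmu.
  have [near_p2 near_p1] := fellow_travel _ _ mu_ge0 (Rle_refl 0) quasi _ le_3K_b le_0_2b.
  by rewrite !Rplus_0_r in near_p1.
have [b [-> le_3K_b le_eps_2b]] := eta_eps_log2 delta_ge0 Heps.
have [near_p2 near_p1] := fellow_travel _ _ Rle_0_1 Heps quasi _ le_3K_b le_eps_2b.
have two : 1 + 1 = 2 by lra.
by rewrite two Rmult_1_l in near_p1.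
Qed.
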